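(* Consider the system $\dot x=-\nabla\psi(x)+Jx+Bu$, $y=Cx+\rho(u)$ on $\mathbb R^n$, where $\psi:\mathbb R^n\to\mathbb R$ is continuously differentiable and strictly convex with $\lim_{\|x\|\to\infty}\psi(x)/\|x\|=\infty$, $J$ is skew-symmetric, $B,C\in\mathbb R^{n\times n}$ are invertible, and $\rho:\mathbb R^n\to\mathbb R^n$. Let $\Phi:\mathbb R^n\to\mathbb R^n$ be the inverse of the map $y\mapsto B^{-1}\nabla\psi(C^{-1}y)-B^{-1}JC^{-1}y$. If $\Phi+\rho$ is the gradient of a (differentiable) convex function, then the steady-state input-output relation of the system is cyclically monotone; if $\Phi+\rho$ is the gradient of a strictly convex function, then the steady-state input-output relation is strictly cyclically monotone.
   Context: The steady-state input-output relation of the system is the set of pairs $(\mathrm u,\mathrm y)\in\mathbb R^n\times\mathbb R^n$ such that there is $\mathrm x$ with $-\nabla\psi(\mathrm x)+J\mathrm x+B\mathrm u=0$ and $\mathrm y=C\mathrm x+\rho(\mathrm u)$. (Under the hypotheses the map $x\mapsto\nabla\psi(x)-Jx$ is a bijection of $\mathbb R^n$, so $\Phi$ is well defined.) A relation $R\subseteq\mathbb R^n\times\mathbb R^n$ is cyclically monotone if for every $N\ge1$ and $(u_1,y_1),\dots,(u_N,y_N)\in R$, $\sum_{i=1}^Ny_i^T(u_i-u_{i-1})\ge0$ with $u_0=u_N$; strictly cyclically monotone if this inequality is strict whenever at least two of the $u_i$ are distinct. *)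

From Stdlib Require Import Reals.
From mathcomp Require Import ssreflect ssrfun ssrbool eqtype ssrnat seq fintype bigop.

Set Implicit Arguments.
Unset Strict Implicit.
Unset Printing Implicit Defensive.

Local Open Scope R_scope.

Definition vec (n : nat) := 'I_n -> R.
Definition mat (n : nat) := 'I_n -> 'I_n -> R.

Definition vzero {n} : vec n := fun _ => 0.
Definition vadd {n} (u v : vec n) : vec n := fun i => u i + v i.
Definition vopp {n} (u : vec n) : vec n := fun i => - u i.
Definition vsub {n} (u v : vec n) : vec n := fun i => u i - v i.
Definition vscale {n} (a : R) (u : vec n) : vec n := fun i => a * u i.

Definition dot {n} (u v : vec n) : R := \big[Rplus/0]_(i < n) (u i * v i).
Definition vnorm {n} (u : vec n) : R := sqrt (dot u u).

Definition mv {n} (A : mat n) (x : vec n) : vec n :=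
  fun i => \big[Rplus/0]_(j < n) (A i j * x j).

Definition skew_symmetric {n} (J : mat n) : Prop :=
  forall i j, J i j = - J j i.

Definition is_inverse_mat {n} (A Ainv : mat n) : Prop :=
  (forall x, mv A (mv Ainv x) = x) /\ (forall x, mv Ainv (mv A x) = x).

Definition invertible_mat {n} (A : mat n) : Prop :=
  exists Ainv, is_inverse_mat A Ainv.

Definition has_gradient_at {n} (f : vec n -> R) (g : vec n) (x : vec n) : Prop :=
  forall eps, 0 < eps -> exists delta, 0 < delta /\
    forall h : vec n, vnorm h < delta ->
      Rabs (f (vadd x h) - f x - dot g h) <= eps * vnorm h.

Definition is_gradient {n} (f : vec n -> R) (gradf : vec n -> vec n) : Prop :=
  forall x, has_gradient_at f (gradf x) x.

Definition continuous_vec {n} (F : vec n -> vec n) : Prop :=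
  forall x eps, 0 < eps -> exists delta, 0 < delta /\
    forall z, vnorm (vsub z x) < delta -> vnorm (vsub (F z) (F x)) < eps.

Definition convex_fun {n} (f : vec n -> R) : Prop :=
  forall x y t, 0 <= t <= 1 ->
    f (vadd (vscale t x) (vscale (1 - t) y)) <= t * f x + (1 - t) * f y.

Definition strictly_convex_fun {n} (f : vec n -> R) : Prop :=
  forall x y t, x <> y -> 0 < t < 1 ->
    f (vadd (vscale t x) (vscale (1 - t) y)) < t * f x + (1 - t) * f y.

Definition superlinear {n} (f : vec n -> R) : Prop :=
  forall M, exists r, forall x, r < vnorm x -> M * vnorm x < f x.

(* Steady-state input-output relation of
   xdot = -gradpsi x + J x + B u,  y = C x + rho u. *)
Definition steady_state_io {n} (gradpsi : vec n -> vec n) (J B C : mat n)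
    (rho : vec n -> vec n) (u y : vec n) : Prop :=
  exists x : vec n,
    vadd (vadd (vopp (gradpsi x)) (mv J x)) (mv B u) = vzero /\
    y = vadd (mv C x) (rho u).

Definition cyclically_monotone {n} (Rel : vec n -> vec n -> Prop) : Prop :=
  forall (N : nat) (us ys : nat -> vec n),
    (1 <= N)%N -> us 0%N = us N ->
    (forall i, (1 <= i <= N)%N -> Rel (us i) (ys i)) ->
    0 <= \big[Rplus/0]_(1 <= i < N.+1) dot (ys i) (vsub (us i) (us i.-1)).

Definition strictly_cyclically_monotone {n} (Rel : vec n -> vec n -> Prop) : Prop :=
  forall (N : nat) (us ys : nat -> vec n),
    (1 <= N)%N -> us 0%N = us N ->
    (forall i, (1 <= i <= N)%N -> Rel (us i) (ys i)) ->
    (exists i j, (1 <= i <= N)%N /\ (1 <= j <= N)%N /\ us i <> us j) ->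
    0 < \big[Rplus/0]_(1 <= i < N.+1) dot (ys i) (vsub (us i) (us i.-1)).

(* A steady state (u, y) with state x satisfies B u = grad psi x - J x, and
   with y = C x this says u = B^-1 grad psi (C^-1 y_0) - B^-1 J C^-1 y_0 for
   y_0 = C x, i.e. C x = Phi u.  Hence the steady-state relation is contained
   in the graph of the gradient G = Phi + rho of a convex function f.  Along a
   cycle u_0, ..., u_N = u_0 the gradient inequality gives
   <G u_i, u_i - u_(i-1)> >= f u_i - f u_(i-1), and the right-hand sides
   telescope to f u_N - f u_0 = 0; strict convexity makes the inequality
   strict at a step where u_i <> u_(i-1). *)

From HB Require Import structures.
From Stdlib Require Import Reals.
From mathcomp Require Import ssreflect ssrfun ssrbool eqtype ssrnat seq fintype bigop.
From Stdlib Require Import Lra FunctionalExtensionality Classical.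

Set Implicit Arguments.
Unset Strict Implicit.

Local Open Scope R_scope.

HB.instance Definition _ := Monoid.isComLaw.Build R 0 Rplus
  (fun x y z => esym (Rplus_assoc x y z)) Rplus_comm Rplus_0_l.

Lemma big_nat_Rle m N (F G : nat -> R) :
  (forall i, (m <= i < N)%N -> F i <= G i) ->
  \big[Rplus/0]_(m <= i < N) F i <= \big[Rplus/0]_(m <= i < N) G i.
Proof.
move=> FG; rewrite big_nat_cond [X in _ <= X]big_nat_cond.
apply: (big_ind2 Rle); first exact: Rle_refl.
- by move=> *; apply: Rplus_le_compat.
- by move=> i /andP[/FG].
Qed.

Lemma big_nat_Rlt m N k (F G : nat -> R) :
  (forall i, (m <= i < N)%N -> F i <= G i) ->
  (m <= k < N)%N -> F k < G k ->
  \big[Rplus/0]_(m <= i < N) F i < \big[Rplus/0]_(m <= i < N) G i.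
Proof.
move=> FG /andP[mk kN] FGk.
rewrite !(big_cat_nat mk (ltnW kN)) !(big_ltn kN) /=.
have lo : \big[Rplus/0]_(m <= i < k) F i <= \big[Rplus/0]_(m <= i < k) G i.
  by apply: big_nat_Rle => i /andP[mi ik]; apply: FG; rewrite mi (ltn_trans ik).
have hi : \big[Rplus/0]_(k.+1 <= i < N) F i <= \big[Rplus/0]_(k.+1 <= i < N) G i.
  by apply: big_nat_Rle => i /andP[ki iN]; apply: FG; rewrite iN (leq_trans mk (ltnW ki)).
lra.
Qed.

Lemma telescope_Rplus (g : nat -> R) N :
  \big[Rplus/0]_(1 <= i < N.+1) (g i - g i.-1) = g N - g 0%N.
Proof.
elim: N => [|N IH]; first by rewrite big_geq //; ring.
by rewrite big_nat_recr //= IH; ring.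
Qed.

Lemma dot_vscaler n (g h : vec n) t : dot g (vscale t h) = t * dot g h.
Proof.
rewrite /dot (big_endo (Rmult t)) => [|x y|]; last 2 first.
- exact: Rmult_plus_distr_l.
- exact: Rmult_0_r.
by apply: eq_bigr => i _; rewrite /vscale; ring.
Qed.

Lemma dot_vsub_swap n (g u v : vec n) : dot g (vsub v u) = - dot g (vsub u v).
Proof.
have -> : vsub v u = vscale (-1) (vsub u v).
  by apply: functional_extensionality => i; rewrite /vsub /vscale; ring.
by rewrite dot_vscaler; ring.
Qed.

Lemma vnorm_ge0 n (h : vec n) : 0 <= vnorm h.
Proof. exact: sqrt_pos. Qed.

Lemma vnorm_vscale n (h : vec n) t : 0 <= t -> vnorm (vscale t h) = t * vnorm h.
Proof.
move=> t_ge0; rewrite /vnorm.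
have -> : dot (vscale t h) (vscale t h) = (t * t) * dot h h.
  rewrite Rmult_assoc -!dot_vscaler /dot.
  by apply: eq_bigr => i _; rewrite /vscale; ring.
have dot_ge0 : 0 <= dot h h.
  by apply: (big_ind (Rle 0)) => [|x y|i _]; [lra | lra | nra].
by rewrite sqrt_mult ?sqrt_square //; nra.
Qed.

Lemma mv_vsub n (A : mat n) a b : mv A (vsub a b) = vsub (mv A a) (mv A b).
Proof.
apply: functional_extensionality => i; rewrite /mv /vsub /Rminus.
rewrite (big_endo Ropp Ropp_plus_distr Ropp_0) -big_split /=.
by apply: eq_bigr => j _; ring.
Qed.

Lemma exists_small_vscale n (h : vec n) delta :
  0 < delta -> exists t, 0 < t <= 1 /\ vnorm (vscale t h) < delta.
Proof.
move=> delta_gt0; have h_ge0 := vnorm_ge0 h.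
exists (Rmin 1 (delta / (vnorm h + 1))).
have t_gt0 : 0 < Rmin 1 (delta / (vnorm h + 1)).
  by apply: Rmin_glb_lt; [lra | apply: Rdiv_lt_0_compat; lra].
split; first by split; [exact: t_gt0 | exact: Rmin_l].
rewrite vnorm_vscale; last lra.
apply: (Rle_lt_trans _ (delta / (vnorm h + 1) * vnorm h)).
  by apply: Rmult_le_compat_r => //; apply: Rmin_r.
have -> : delta / (vnorm h + 1) * vnorm h = delta - delta / (vnorm h + 1) by field; lra.
suff : 0 < delta / (vnorm h + 1) by lra.
by apply: Rdiv_lt_0_compat; lra.
Qed.

Lemma convex_fun_segment n (f : vec n -> R) u v t :
  convex_fun f -> 0 <= t <= 1 ->
  f (vadd u (vscale t (vsub v u))) - f u <= t * (f v - f u).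
Proof.
move=> f_cvx t01.
have -> : vadd u (vscale t (vsub v u)) = vadd (vscale t v) (vscale (1 - t) u).
  by apply: functional_extensionality => i; rewrite /vadd /vscale /vsub; ring.
have := f_cvx v u t t01; lra.
Qed.

Lemma convex_gradient_ineq n (f : vec n -> R) g u v :
  convex_fun f -> has_gradient_at f g u -> f u + dot g (vsub v u) <= f v.
Proof.
move=> f_cvx f_diff; set h := vsub v u; have h_ge0 := vnorm_ge0 h.
suff : dot g h <= f v - f u by lra.
apply: le_epsilon => e e_gt0.
set eps := e / (vnorm h + 1).
have eps_gt0 : 0 < eps by apply: Rdiv_lt_0_compat; lra.
have [delta [delta_gt0 f_approx]] := f_diff eps eps_gt0.
have [t [t01 th_small]] := exists_small_vscale h delta_gt0.
have := f_approx _ th_small; rewrite dot_vscaler vnorm_vscale; last lra.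
rewrite -Rabs_Ropp => /(Rle_trans _ _ _ (Rle_abs _)) lin_lb.
have secant := convex_fun_segment u v f_cvx (conj (Rlt_le _ _ (proj1 t01)) (proj2 t01)).
have step : t * dot g h <= t * (f v - f u + eps * vnorm h).
  rewrite -/h in secant; lra.
have eps_h : eps * vnorm h = e - eps by rewrite /eps; field; lra.
have := Rmult_le_reg_l _ _ _ (proj1 t01) step; lra.
Qed.

Lemma convex_of_strictly_convex n (f : vec n -> R) :
  strictly_convex_fun f -> convex_fun f.
Proof.
move=> f_scvx x y t t01.
have [-> | xy] := classic (x = y).
  have -> : vadd (vscale t y) (vscale (1 - t) y) = y.
    by apply: functional_extensionality => i; rewrite /vadd /vscale; ring.
  lra.
have [-> | t_ne0] := Req_dec t 0.
  have -> : vadd (vscale 0 x) (vscale (1 - 0) y) = y.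
    by apply: functional_extensionality => i; rewrite /vadd /vscale; ring.
  lra.
have [-> | t_ne1] := Req_dec t 1.
  have -> : vadd (vscale 1 x) (vscale (1 - 1) y) = x.
    by apply: functional_extensionality => i; rewrite /vadd /vscale; ring.
  lra.
by apply: Rlt_le; apply: f_scvx => //; lra.
Qed.

(* The gradient inequality at the midpoint m, combined with strict convexity on [u, v]. *)
Lemma strictly_convex_gradient_ineq n (f : vec n -> R) g u v :
  strictly_convex_fun f -> has_gradient_at f g u -> u <> v ->
  f u + dot g (vsub v u) < f v.
Proof.
move=> f_scvx f_diff uv.
set m := vadd (vscale (1/2) v) (vscale (1 - 1/2) u).
have at_m := convex_gradient_ineq m (convex_of_strictly_convex f_scvx) f_diff.
have half_step : vsub m u = vscale (1/2) (vsub v u).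
  by apply: functional_extensionality => i; rewrite /m /vsub /vadd /vscale; field.
rewrite half_step dot_vscaler in at_m.
have := f_scvx v u (1/2) (nesym uv) ltac:(lra); rewrite -/m; lra.
Qed.

Lemma exists_step_neq T (us : nat -> T) N i j :
  (i <= N)%N -> (j <= N)%N -> us i <> us j ->
  exists k, (1 <= k <= N)%N /\ us k <> us k.-1.
Proof.
move=> iN jN uij; apply: NNPP => no_step.
suff us_const : forall k, (k <= N)%N -> us k = us 0%N.
  by apply: uij; rewrite !us_const.
elim=> [// | k IH] kN; rewrite -IH ?(ltnW kN) //.
by apply: NNPP => step; apply: no_step; exists k.+1.
Qed.

Section GradientCyclicMonotone.

Variables (n : nat) (f : vec n -> R) (G : vec n -> vec n).
Hypothesis G_grad : is_gradient f G.

Lemma sum_steps_eq0 N (us : nat -> vec n) : us 0%N = us N ->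
  \big[Rplus/0]_(1 <= i < N.+1) (f (us i) - f (us i.-1)) = 0.
Proof. by move=> cyc; rewrite (telescope_Rplus (f \o us)) /= cyc; ring. Qed.

Lemma gradient_cyclically_monotone :
  convex_fun f -> cyclically_monotone (fun u y => y = G u).
Proof.
move=> f_cvx N us ys _ cyc in_graph; rewrite -[X in X <= _](sum_steps_eq0 cyc).
apply: big_nat_Rle => i iN; rewrite (in_graph i) ?ltnS // dot_vsub_swap.
have := convex_gradient_ineq (us i.-1) f_cvx (G_grad (us i)); lra.
Qed.

Lemma gradient_strictly_cyclically_monotone :
  strictly_convex_fun f -> strictly_cyclically_monotone (fun u y => y = G u).
Proof.
move=> f_scvx N us ys _ cyc in_graph [i [j [/andP[_ iN] [/andP[_ jN] uij]]]].
have [k [kN step_k]] := exists_step_neq iN jN uij.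
rewrite -[X in X < _](sum_steps_eq0 cyc).
apply: (big_nat_Rlt (k := k)).
- move=> l lN; rewrite (in_graph l) ?ltnS // dot_vsub_swap.
  have f_cvx := convex_of_strictly_convex f_scvx.
  have := convex_gradient_ineq (us l.-1) f_cvx (G_grad (us l)); lra.
- by rewrite ltnS.
- rewrite (in_graph k kN) dot_vsub_swap.
  have := strictly_convex_gradient_ineq f_scvx (G_grad (us k)) step_k; lra.
Qed.

End GradientCyclicMonotone.

Lemma cyclically_monotone_sub n (R1 R2 : vec n -> vec n -> Prop) :
  (forall u y, R1 u y -> R2 u y) -> cyclically_monotone R2 -> cyclically_monotone R1.
Proof. by move=> R12 mono N us ys N_gt0 cyc in_R1; apply: mono => // i /in_R1/R12. Qed.

Lemma strictly_cyclically_monotone_sub n (R1 R2 : vec n -> vec n -> Prop) :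
  (forall u y, R1 u y -> R2 u y) ->
  strictly_cyclically_monotone R2 -> strictly_cyclically_monotone R1.
Proof. by move=> R12 mono N us ys N_gt0 cyc in_R1; apply: mono => // i /in_R1/R12. Qed.

Lemma steady_state_io_output n (gradpsi : vec n -> vec n) (J B C Binv Cinv : mat n)
    (rho Phi : vec n -> vec n) u y :
  (forall x, mv Binv (mv B x) = x) -> (forall x, mv Cinv (mv C x) = x) ->
  (forall y, Phi (vsub (mv Binv (gradpsi (mv Cinv y))) (mv Binv (mv J (mv Cinv y)))) = y) ->
  steady_state_io gradpsi J B C rho u y -> y = vadd (Phi u) (rho u).
Proof.
move=> BinvK CinvK PhiK [x [equilibrium ->]].
have Bu : mv B u = vsub (gradpsi x) (mv J x).
  apply: functional_extensionality => i.
  have := equal_f equilibrium i; rewrite /vadd /vopp /vzero /vsub; lra.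
have u_eq : u = vsub (mv Binv (gradpsi (mv Cinv (mv C x)))) (mv Binv (mv J (mv Cinv (mv C x)))).
  by rewrite CinvK -mv_vsub -Bu BinvK.
by rewrite {2}u_eq PhiK.
Qed.

Theorem mainTheorem12 (n : nat) (psi : vec n -> R) (gradpsi : vec n -> vec n)
  (J B C Binv Cinv : mat n) (rho Phi : vec n -> vec n) :
  is_gradient psi gradpsi ->
  continuous_vec gradpsi ->
  strictly_convex_fun psi ->
  superlinear psi ->
  skew_symmetric J ->
  is_inverse_mat B Binv ->
  is_inverse_mat C Cinv ->
  (* Phi is the inverse of y |-> B^-1 gradpsi(C^-1 y) - B^-1 J C^-1 y *)
  (forall y, Phi (vsub (mv Binv (gradpsi (mv Cinv y))) (mv Binv (mv J (mv Cinv y)))) = y) ->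
  (forall u, vsub (mv Binv (gradpsi (mv Cinv (Phi u)))) (mv Binv (mv J (mv Cinv (Phi u)))) = u) ->
  ((exists f : vec n -> R, convex_fun f /\ is_gradient f (fun u => vadd (Phi u) (rho u))) ->
     cyclically_monotone (steady_state_io gradpsi J B C rho)) /\
  ((exists f : vec n -> R, strictly_convex_fun f /\ is_gradient f (fun u => vadd (Phi u) (rho u))) ->
     strictly_cyclically_monotone (steady_state_io gradpsi J B C rho)).
Proof.
(* The hypotheses on psi and J only guarantee that Phi exists; as Phi is given,
   only the identity Phi (T y) = y for the map T it inverts is needed. *)
move=> _ _ _ _ _ [_ BinvK] [_ CinvK] PhiK _.
have in_graph u y : steady_state_io gradpsi J B C rho u y -> y = vadd (Phi u) (rho u).
  exact: steady_state_io_output BinvK CinvK PhiK.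
split=> [[f [f_cvx f_grad]] | [f [f_scvx f_grad]]].
- exact: cyclically_monotone_sub in_graph (gradient_cyclically_monotone f_grad f_cvx).
- exact: strictly_cyclically_monotone_sub in_graph
    (gradient_strictly_cyclically_monotone f_grad f_scvx).
Qed.
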